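(* Let $t\in[1,2]$, $\rho_1=\frac{\|p_{\le A}\|_r^{r/t}}{\sqrt n\,\|p_{\le I}\|_r^{r/4}}$ (set to $0$ if $A=-\infty$) and $\rho_2=\frac{\|p_{>I}\|_1^{\frac{2-t}{t}}}{n^{\frac{2t-2}{t}}}$. Then $$\rho_1+\rho_2+\frac1n\asymp_\eta\sqrt{\frac{\|p_{\le I}\|_r}{n}}+\rho_2+\frac1n.$$
   Context: $p\in[0,1]^N$ with $p_1\ge\dots\ge p_N$ and $\max_jp_j\le1/2$; $n\ge2$; $\eta\in(0,1)$. $\|x\|_s=(\sum_j|x_j|^s)^{1/s}$; $r=\frac{2t}{4-t}$, $b=\frac{4-2t}{4-t}$; $x_{\le u}=(x_1,\dots,x_u,0,\dots,0)$, $x_{>u}=(0,\dots,0,x_{u+1},\dots,x_N)$. $I=\min\{J\in\{0,\dots,N\}:\sum_{i>J}p_i^2\le c_I/n^2\}$; $A=\max\{a\in\{1,\dots,I\}:p_a^{b/2}\ge c_A/(\sqrt n(\sum_{i\le I}p_i^r)^{1/4})\}$ with $\max\emptyset=-\infty$ and $x_{\le-\infty}=0$; $c_I,c_A>0$ are small constants depending only on $\eta$. $\asymp_\eta$ means equality up to multiplicative constants depending only on $\eta$. *)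

From HB Require Import structures.
From mathcomp Require Import all_boot all_order all_algebra.
From mathcomp Require Import all_classical all_reals all_analysis.
Set Implicit Arguments. Unset Strict Implicit. Unset Printing Implicit Defensive.
Import Order.TTheory GRing.Theory Num.Theory.
Local Open Scope ring_scope.

(* Vectors x in R^N are functions nat -> R, coordinates indexed 1..N. *)

Definition lnorm {R : realType} (N : nat) (s : R) (x : nat -> R) : R :=
  (\sum_(1 <= j < N.+1) `|x j| `^ s) `^ s^-1.

Definition trunc_le {R : realType} (u : nat) (x : nat -> R) : nat -> R :=
  fun j => if (j <= u)%N then x j else 0.
Definition trunc_gt {R : realType} (u : nat) (x : nat -> R) : nat -> R :=
  fun j => if (u < j)%N then x j else 0.

Definition tail_sq {R : realType} (N : nat) (p : nat -> R) (J : nat) : R :=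
  \sum_(J.+1 <= i < N.+1) p i ^+ 2.

(* I = min { J in {0..N} : sum_{i>J} p_i^2 <= c_I / n^2 }
   (find on iota 0 (N+1) returns the first such J; J = N always qualifies
    when c_I >= 0). *)
Definition idxI {R : realType} (cI : R) (n N : nat) (p : nat -> R) : nat :=
  find (fun J => tail_sq N p J <= cI / (n%:R ^+ 2)) (iota 0 N.+1).

Definition rexp {R : realType} (t : R) : R := 2 * t / (4 - t).
Definition bexp {R : realType} (t : R) : R := (4 - 2 * t) / (4 - t).

(* A = max { a in {1..I} : p_a^(b/2) >= c_A / (sqrt n (sum_{i<=I} p_i^r)^(1/4)) },
   None encodes max(empty) = -infinity. *)
Definition idxA {R : realType} (cI cA t : R) (n N : nat) (p : nat -> R)
  : option nat :=
  let I := idxI cI n N p in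
  let S := \sum_(1 <= i < I.+1) p i `^ rexp t in
  let cand := [seq a <- iota 1 I |
                cA / (Num.sqrt (n%:R) * S `^ (4 : R)^-1) <= p a `^ (bexp t / 2)] in
  if cand is [::] then None else Some (last 0%N cand).

Definition rho1 {R : realType} (cI cA t : R) (n N : nat) (p : nat -> R) : R :=
  let r := rexp t in
  let I := idxI cI n N p in
  match idxA cI cA t n N p with
  | None => 0
  | Some A => (lnorm N r (trunc_le A p)) `^ (r / t)
              / (Num.sqrt (n%:R) * (lnorm N r (trunc_le I p)) `^ (r / 4))
  end.

Definition rho2 {R : realType} (cI t : R) (n N : nat) (p : nat -> R) : R :=
  let I := idxI cI n N p in
  (lnorm N 1 (trunc_gt I p)) `^ ((2 - t) / t) / (n%:R) `^ ((2 * t - 2) / t).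

From HB Require Import structures.
From mathcomp Require Import all_boot all_order all_algebra.
From mathcomp Require Import all_classical all_reals all_analysis.
From mathcomp Require Import ring lra.

Set Implicit Arguments.
Unset Strict Implicit.
Unset Printing Implicit Defensive.
Import Order.TTheory GRing.Theory Num.Theory.
Local Open Scope ring_scope.

(* If [A] is finite then [A <= I], and since [r/t - r/4 = 1/2] the term [rho_1] is
   at most [sqrt (||p_{<=I}||_r / n)], with equality when [A = I]; this gives the
   upper bound with constant 1.  For the lower bound we may assume [I > 0].  If
   [p_I] passes the idxA_threshold defining [A], then [A = I].  Otherwise the
   minimality of [I] gives [c_I / n^2 < p_I (p_I + ||p_{>I}||_1)], hence
   [min(1, c_I/2) <= n^2 p_I max(||p_{>I}||_1, 1/n)]; eliminating [p_I] between
   this and the failed idxA_threshold inequality (a linear computation on logarithms)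
   bounds [sqrt (||p_{<=I}||_r / n)] by a constant times
   [max(||p_{>I}||_1, 1/n)^((2-t)/t) / n^((2t-2)/t) <= rho_2 + 1/n]. *)

Section Exponents.
Variable R : realType.

Lemma rexp_gt0 (t : R) : 0 < t < 4 -> 0 < rexp t.
Proof. by move=> /andP[t0 t4]; rewrite /rexp divr_gt0 //; lra. Qed.

Lemma rexp_div (t : R) : 0 < t < 4 -> rexp t / t = rexp t / 4 + 2^-1.
Proof.
move=> /andP[t0 t4]; rewrite /rexp; field.
by rewrite !gt_eqF // subr_gt0.
Qed.

Lemma ln_sqrt (x : R) : 0 < x -> ln (Num.sqrt x) = ln x / 2.
Proof. by move=> x0; rewrite -powR12_sqrt ?ltW // ln_powR mulrC. Qed.

Lemma powR_rexp_ratio (t nn L : R) : 0 < t < 4 -> 0 < nn -> 0 <= L ->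
  L `^ (rexp t / t) / (Num.sqrt nn * L `^ (rexp t / 4)) = Num.sqrt (L / nn).
Proof.
move=> ht n0 L0; have r0 := rexp_gt0 ht.
have [->|L_neq0] := eqVneq L 0.
  by rewrite powR0 ?mul0r ?sqrtr0 // gt_eqF // divr_gt0 //; case/andP: ht.
have Lr_gt0 : 0 < L `^ (rexp t / 4) by rewrite powR_gt0 // lt_neqAle eq_sym L_neq0.
rewrite rexp_div // powRD ?L_neq0 ?implybT // powR12_sqrt // sqrtrM // sqrtrV ?ltW //.
by field; rewrite !gt_eqF ?sqrtr_gt0.
Qed.

(* The logarithmic form of [sqrt_powR_le_rho2] below, with [x, y, z, m] standing
   for [ln S, ln q, ln n, ln M]: the unknown [y] is eliminated between the two
   hypotheses. *)
Lemma log_rho2_bound (t a k x y z m : R) : 1 <= t <= 2 ->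
  bexp t / 2 * y < a - (z / 2 + 4^-1 * x) ->
  k <= z *+ 2 + y + m ->
  ((rexp t)^-1 * x - z) / 2 <=
    3 * `|a| + `|k| + ((2 - t) / t * m - (2 * t - 2) / t * z).
Proof.
move=> /andP[t1 t2] hy hk.
have t0 : t != 0 by rewrite gt_eqF //; lra.
have t4 : 4 - t != 0 by rewrite subr_eq0; apply/eqP; lra.
set u := (4 - t) / t; set e := (2 - t) / t.
have u13 : 1 <= u <= 3 by rewrite /u ler_pdivlMr ?ler_pdivrMr //; lra.
have e01 : 0 <= e <= 1 by rewrite /e ler_pdivrMr ?divr_ge0 //=; lra.
have -> : (rexp t)^-1 = u / 2 by rewrite /rexp /u; field; rewrite t4 t0.
have -> : (2 * t - 2) / t = (u + 1) / 2 - 2 * e by rewrite /u /e; field.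
have ue : u * (bexp t / 2) = e by rewrite /bexp /u /e; field; rewrite t4 t0.
have huy : e * y + u * (z / 2 + 4^-1 * x) < u * a.
  by rewrite -ue -mulrA -mulrDr ltr_pM2l //; lra.
have hke : e * k <= e * (z *+ 2 + y + m) by apply: ler_wpM2l; case/andP: e01.
have hua : u * a <= 3 * `|a|.
  apply: (le_trans (ler_wpM2l _ (ler_norm a))); first lra.
  by apply: ler_wpM2r; [exact: normr_ge0 | lra].
have hek : - `|k| <= e * k.
  have : - (e * `|k|) <= e * k.
    by rewrite -mulrN; apply: ler_wpM2l; [lra | rewrite lerNl ler_normr lexx orbT].
  by apply: le_trans; rewrite lerN2 -[leRHS]mul1r ler_wpM2r //; lra.
lra.
Qed.
End Exponents.

Section Analytic.
Variable R : realType.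

Definition kappa (c : R) : R := Num.min 1 (c / 2).

Definition rho_const (cI cA : R) : R := expR (3 * `|ln cA| + `|ln (kappa cI)|).

Lemma kappa_gt0 (c : R) : 0 < c -> 0 < kappa c.
Proof. by move=> c0; rewrite lt_min ltr01 divr_gt0. Qed.

Lemma rho_const_ge1 (cI cA : R) : 1 <= rho_const cI cA.
Proof.
by apply: le_trans (expR_ge1Dx _); rewrite lerDl addr_ge0 ?mulr_ge0.
Qed.

Lemma kappa_le_mass (c nn q l : R) : 0 < nn -> 0 <= q -> 0 <= l ->
  c / nn ^+ 2 < q * (q + l) -> kappa c <= nn ^+ 2 * q * Num.max l (1 / nn).
Proof.
move=> n0 q0 l0 hc; set M := Num.max l (1 / nn).
have lM : l <= M by rewrite le_max lexx.
have nM : 1 <= M * nn by rewrite -ler_pdivrMr // le_max lexx orbT.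
have [big|small] := leP 1 (nn ^+ 2 * q * M); first by rewrite /kappa ge_min big.
have qM : q <= M.
  (* otherwise [n^2 q M > (n M)^2 >= 1] *)
  rewrite leNgt; apply/negP => Mq; move: small; rewrite ltNge => /negP; apply.
  have M0 : 0 < M by rewrite lt_max divr_gt0 ?orbT.
  apply: (le_trans (exprn_ege1 2 nM)).
  rewrite exprMn mulrC -mulrA; apply: ler_wpM2l; first exact/exprn_ge0/ltW.
  by rewrite expr2 ler_pM2r // ltW.
move: hc; rewrite ltr_pdivrMr ?exprn_gt0 // => hc.
have hq2 : q * (q + l) * nn ^+ 2 <= (q * (M + M)) * nn ^+ 2.
  apply: ler_wpM2r; first exact/exprn_ge0/ltW.
  by apply: ler_wpM2l => //; apply: lerD.
rewrite /kappa ge_min; apply/orP; right; nra.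
Qed.

Lemma sqrt_powR_le_rho2 (c k t nn S q M : R) :
  0 < c -> 0 < k -> 1 <= t <= 2 -> 0 < nn -> 0 < S -> 0 < q -> 0 < M ->
  q `^ (bexp t / 2) < c / (Num.sqrt nn * S `^ 4^-1) ->
  k <= nn ^+ 2 * q * M ->
  Num.sqrt (S `^ (rexp t)^-1 / nn) <=
    expR (3 * `|ln c| + `|ln k|) * (M `^ ((2 - t) / t) / nn `^ ((2 * t - 2) / t)).
Proof.
move=> c0 k0 ht n0 S0 q0 M0 hq hk.
have sn0 : 0 < Num.sqrt nn by rewrite sqrtr_gt0.
have S4 : 0 < S `^ 4^-1 by apply: powR_gt0.
move: hq; rewrite -ltr_ln ?posrE ?powR_gt0 ?divr_gt0 ?mulr_gt0 //.
rewrite ln_div ?posrE ?powR_gt0 ?mulr_gt0 // lnM ?posrE //.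
rewrite !ln_powR ln_sqrt // => hq.
move: hk; rewrite -ler_ln ?posrE ?mulr_gt0 ?exprn_gt0 //.
rewrite lnM ?posrE ?mulr_gt0 ?exprn_gt0 // lnM ?posrE ?exprn_gt0 // lnXn // => hk.
have Sr : 0 < S `^ (rexp t)^-1 by apply: powR_gt0.
have rho2_gt0 : 0 < M `^ ((2 - t) / t) / nn `^ ((2 * t - 2) / t).
  by rewrite divr_gt0 ?powR_gt0.
have rhs_gt0 : 0 < expR (3 * `|ln c| + `|ln k|) *
                   (M `^ ((2 - t) / t) / nn `^ ((2 * t - 2) / t)).
  by rewrite mulr_gt0 ?expR_gt0.
rewrite -ler_ln ?posrE ?sqrtr_gt0 ?divr_gt0 //.
rewrite ln_sqrt ?divr_gt0 // ln_div ?posrE // lnM ?posrE ?expR_gt0 // expRK.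
rewrite ln_div ?posrE ?powR_gt0 // !ln_powR.
exact (log_rho2_bound ht hq hk).
Qed.

Lemma powR_max_le_rho2 (t nn l : R) : t != 0 -> 0 < nn -> 0 <= l ->
  Num.max l (1 / nn) `^ ((2 - t) / t) / nn `^ ((2 * t - 2) / t) <=
  l `^ ((2 - t) / t) / nn `^ ((2 * t - 2) / t) + 1 / nn.
Proof.
move=> t0 n0 l0; have [ln_l|l_ln] := leP (1 / nn) l.
  by rewrite lerDl divr_ge0 // ltW.
have -> : (1 / nn) `^ ((2 - t) / t) / nn `^ ((2 * t - 2) / t) = 1 / nn.
  have n1 : 0 < 1 / nn by rewrite divr_gt0.
  have [ne nf] : 0 < (1 / nn) `^ ((2 - t) / t) /\ 0 < nn `^ ((2 * t - 2) / t).
    by split; apply: powR_gt0.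
  apply: ln_inj; rewrite ?posrE ?divr_gt0 //.
  rewrite !ln_div ?posrE // !ln_powR ln_div ?posrE // ln1.
  by rewrite -[(2 * t - 2) / t](_ : 1 - (2 - t) / t = _) //; field.
by rewrite lerDr divr_ge0 ?powR_ge0.
Qed.

End Analytic.

Section Truncations.
Variables (R : realType) (N : nat) (p : nat -> R).
Hypothesis p_ge0 : forall i, (1 <= i <= N)%N -> 0 <= p i.

Lemma lnorm_trunc_le_mono A I (s : R) : (A <= I)%N -> 0 < s ->
  lnorm N s (trunc_le A p) <= lnorm N s (trunc_le I p).
Proof.
move=> AI s0; have sum_ge0 u : 0 <= \sum_(1 <= j < N.+1) `|trunc_le u p j| `^ s.
  by apply: sumr_ge0 => j _; apply: powR_ge0.
apply: ge0_ler_powR; rewrite ?nnegrE ?invr_ge0 ?sum_ge0 //; first exact: ltW.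
apply: ler_sum => j _; rewrite /trunc_le; case: (leqP j A) => [jA|_].
  by rewrite (leq_trans jA AI).
by rewrite normr0 powR0 ?gt_eqF // powR_ge0.
Qed.

Lemma lnorm_trunc_le I (s : R) : (I <= N)%N -> s != 0 ->
  lnorm N s (trunc_le I p) = (\sum_(1 <= i < I.+1) p i `^ s) `^ s^-1.
Proof.
move=> IN s0; congr (_ `^ _); rewrite (@big_cat_nat _ _ _ I.+1) //=.
rewrite [X in _ + X]big_nat_cond [X in _ + X]big1 ?addr0; last first.
  by move=> j /andP[/andP[Ij _] _]; rewrite /trunc_le leqNgt Ij normr0 powR0.
apply: eq_big_nat => j /andP[j1 jI]; rewrite /trunc_le -ltnS jI ger0_norm //.
by apply: p_ge0; rewrite j1 (leq_trans _ IN).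
Qed.

Lemma lnorm1_trunc_gt I : (I <= N)%N ->
  lnorm N 1 (trunc_gt I p) = \sum_(I.+1 <= j < N.+1) p j.
Proof.
move=> IN; rewrite /lnorm invr1 powRr1; last by apply: sumr_ge0 => j _; apply: powR_ge0.
rewrite (@big_cat_nat _ _ _ I.+1) //= big_nat_cond big1 ?add0r; last first.
  by move=> j /andP[/andP[_ jI] _]; rewrite /trunc_gt ltnNge -ltnS jI normr0 powR0.
apply: eq_big_nat => j /andP[Ij jN].
have pj_ge0 : 0 <= p j by apply: p_ge0; rewrite (leq_ltn_trans (leq0n I) Ij) -ltnS.
by rewrite /trunc_gt Ij ger0_norm ?powRr1.
Qed.

Hypothesis p_noninc : forall i j, (1 <= i <= j)%N -> (j <= N)%N -> p j <= p i.

Lemma tail_sq_le_mul_sum I : (0 < I)%N ->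
  tail_sq N p I <= p I * \sum_(I.+1 <= j < N.+1) p j.
Proof.
move=> I0; rewrite /tail_sq mulr_sumr; apply: ler_sum_nat => i /andP[Ii iN].
rewrite expr2; apply: ler_wpM2r.
  by apply: p_ge0; rewrite (leq_ltn_trans (leq0n I) Ii) -ltnS.
by apply: p_noninc; [rewrite I0 ltnW | rewrite -ltnS].
Qed.

End Truncations.

Lemma tail_sq_pred (R : realType) N (p : nat -> R) I : (0 < I)%N -> (I <= N)%N ->
  tail_sq N p I.-1 = p I ^+ 2 + tail_sq N p I.
Proof. by move=> I0 IN; rewrite /tail_sq prednK // big_ltn // ltnS. Qed.

Section Indices.
Variables (R : realType) (cI : R) (n N : nat) (p : nat -> R).
Hypothesis cI_gt0 : 0 < cI.

Lemma idxI_le : (idxI cI n N p <= N)%N.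
Proof.
rewrite /idxI -ltnS -[X in (_ < X)%N](size_iota 0 N.+1) -has_find.
apply/hasP; exists N; first by rewrite mem_iota leqnn.
by rewrite /tail_sq big_geq // divr_ge0 ?sqr_ge0 ?ltW.
Qed.

Lemma idxI_minimal : (0 < idxI cI n N p)%N ->
  cI / n%:R ^+ 2 < tail_sq N p (idxI cI n N p).-1.
Proof.
move=> I0; rewrite ltNge.
have := @before_find _ 0%N (fun J => tail_sq N p J <= cI / n%:R ^+ 2)
  (iota 0 N.+1) (idxI cI n N p).-1.
rewrite nth_iota ?add0n; last by rewrite ltnS (leq_trans (leq_pred _) idxI_le).
by rewrite /idxI in I0 *; move=> /(_ _) ->; rewrite // ltn_predL.
Qed.

Local Notation I := (idxI cI n N p).

Definition idxA_threshold (cA t : R) : R :=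
  cA / (Num.sqrt n%:R * (\sum_(1 <= i < I.+1) p i `^ rexp t) `^ 4^-1).

Lemma idxA_le_idxI cA t A : idxA cI cA t n N p = Some A -> (A <= I)%N.
Proof.
rewrite /idxA; case E: [seq _ <- iota 1 I | _] => [//|a s] [<-].
have := mem_last a s; rewrite -E mem_filter mem_iota add1n ltnS.
by case/andP=> _ /andP[].
Qed.

Lemma idxA_idxI cA t : (0 < I)%N -> idxA_threshold cA t <= p I `^ (bexp t / 2) ->
  idxA cI cA t n N p = Some I.
Proof.
move=> I0 hI; rewrite /idxA.
have -> : iota 1 I = rcons (iota 1 I.-1) I.
  by rewrite -{1}(prednK I0) -[I.-1.+1]addn1 iotaD cats1 add1n prednK.
rewrite filter_rcons hI.
by case: [seq _ <- iota 1 I.-1 | _] => [|a s] //=; rewrite last_rcons.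
Qed.

End Indices.

Section Bounds.
Variables (R : realType) (cI cA t : R) (n N : nat) (p : nat -> R).
Hypotheses (n_gt0 : (0 < n)%N) (t_range : 1 <= t <= 2).

Local Notation I := (idxI cI n N p).
Local Notation Q := (Num.sqrt (lnorm N (rexp t) (trunc_le I p) / n%:R)).

Let t_gt0_lt4 : 0 < t < 4.
Proof. by case/andP: t_range => t1 t2; apply/andP; split; lra. Qed.

Let n_gt0R : 0 < n%:R :> R.
Proof. by rewrite ltr0n. Qed.

Lemma rho1_ge0 : 0 <= rho1 cI cA t n N p.
Proof.
rewrite /rho1; case: idxA => [A|//].
by rewrite divr_ge0 ?mulr_ge0 ?sqrtr_ge0 ?powR_ge0.
Qed.

Lemma rho2_ge0 : 0 <= rho2 cI t n N p.
Proof. by rewrite /rho2 divr_ge0 ?powR_ge0. Qed.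

Lemma rho1_le_sqrt_lnorm : rho1 cI cA t n N p <= Q.
Proof.
rewrite /rho1; case hA: idxA => [A|]; last exact: sqrtr_ge0.
rewrite -(powR_rexp_ratio t_gt0_lt4 n_gt0R (powR_ge0 _ _)).
apply: ler_wpM2r; first by rewrite invr_ge0 mulr_ge0 ?sqrtr_ge0 ?powR_ge0.
apply: ge0_ler_powR; rewrite ?nnegrE ?powR_ge0 //.
  by apply: divr_ge0; apply: ltW; [exact: rexp_gt0 | case/andP: t_gt0_lt4].
exact/lnorm_trunc_le_mono/rexp_gt0/t_gt0_lt4/(idxA_le_idxI hA).
Qed.

Lemma sqrt_lnorm_eq_rho1 : (0 < I)%N ->
  idxA_threshold cI n N p cA t <= p I `^ (bexp t / 2) -> rho1 cI cA t n N p = Q.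
Proof.
move=> I_gt0 hI; rewrite /rho1 (idxA_idxI I_gt0 hI).
exact: powR_rexp_ratio (powR_ge0 _ _).
Qed.

Hypotheses (cI_gt0 : 0 < cI) (cA_gt0 : 0 < cA).
Hypothesis p_ge0 : forall i, (1 <= i <= N)%N -> 0 <= p i.
Hypothesis p_noninc : forall i j, (1 <= i <= j)%N -> (j <= N)%N -> p j <= p i.

Lemma sqrt_lnorm_le_rho2 : (0 < I)%N ->
  p I `^ (bexp t / 2) < idxA_threshold cI n N p cA t ->
  Q <= rho_const cI cA * (rho2 cI t n N p + 1 / n%:R).
Proof.
move=> I_gt0 hI; have I_le := idxI_le n N p cI_gt0.
have pI_ge0 : 0 <= p I by apply: p_ge0; rewrite I_gt0 I_le.
set l := lnorm N 1 (trunc_gt I p).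
have l_ge0 : 0 <= l by apply: powR_ge0.
have mass : cI / n%:R ^+ 2 < p I * (p I + l).
  have := idxI_minimal cI_gt0 I_gt0.
  have := tail_sq_le_mul_sum p_ge0 p_noninc I_gt0.
  by rewrite tail_sq_pred // /l lnorm1_trunc_gt // mulrDr -expr2; lra.
have pI_gt0 : 0 < p I.
  rewrite lt_neqAle pI_ge0 andbT eq_sym; apply: contraTneq mass => ->.
  by rewrite mul0r -leNgt divr_ge0 ?exprn_ge0 ?ltW.
rewrite lnorm_trunc_le ?gt_eqF ?rexp_gt0 //.
set S := \sum_(1 <= i < I.+1) p i `^ rexp t.
have S_gt0 : 0 < S.
  rewrite /S big_nat_recr //=; apply: (lt_le_trans (powR_gt0 (rexp t) pI_gt0)).
  by rewrite lerDr; apply: sumr_ge0 => i _; apply: powR_ge0.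
have M_gt0 : 0 < Num.max l (1 / n%:R) by rewrite lt_max divr_gt0 ?orbT.
apply: le_trans (sqrt_powR_le_rho2 cA_gt0 (kappa_gt0 cI_gt0) t_range n_gt0R
  S_gt0 pI_gt0 M_gt0 hI (kappa_le_mass n_gt0R pI_ge0 l_ge0 mass)) _.
apply: ler_wpM2l; first exact/ltW/expR_gt0.
by apply: powR_max_le_rho2; rewrite ?gt_eqF //; case/andP: t_gt0_lt4.
Qed.

Lemma sqrt_lnorm_le_rho :
  Q <= rho_const cI cA * (rho1 cI cA t n N p + rho2 cI t n N p + 1 / n%:R).
Proof.
have K_ge1 := rho_const_ge1 cI cA.
have rho1_nneg := rho1_ge0; have rho2_nneg := rho2_ge0.
have inv_n_ge0 : 0 <= 1 / n%:R :> R by rewrite divr_ge0 ?ltW.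
have [I0|I_gt0] := posnP I.
  rewrite lnorm_trunc_le ?idxI_le ?gt_eqF ?rexp_gt0 // I0 big_geq // powR0.
    by rewrite mul0r sqrtr0; nra.
  by rewrite invr_eq0 gt_eqF ?rexp_gt0.
have [hI|hI] := leP (idxA_threshold cI n N p cA t) (p I `^ (bexp t / 2)).
  rewrite -(sqrt_lnorm_eq_rho1 I_gt0 hI); nra.
apply: le_trans (sqrt_lnorm_le_rho2 I_gt0 hI) _.
apply: ler_wpM2l; lra.
Qed.

End Bounds.

Theorem lemmaA7 (R : realType) (cI cA : R -> R)
  (hc : forall eta : R, 0 < eta < 1 -> 0 < cI eta /\ 0 < cA eta)
  (eta : R) (heta : 0 < eta < 1) :
  exists C1 C2 : R, 0 < C1 /\ 0 < C2 /\
  forall (N n : nat) (p : nat -> R) (t : R),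
    (2 <= n)%N ->
    1 <= t <= 2 ->
    (forall i, (1 <= i <= N)%N -> 0 <= p i <= 1 / 2) ->
    (forall i j, (1 <= i <= j)%N -> (j <= N)%N -> p j <= p i) ->
    let I := idxI (cI eta) n N p in
    let LHS := rho1 (cI eta) (cA eta) t n N p + rho2 (cI eta) t n N p
               + 1 / n%:R in
    let RHS := Num.sqrt (lnorm N (rexp t) (trunc_le I p) / n%:R)
               + rho2 (cI eta) t n N p + 1 / n%:R in
    C1 * RHS <= LHS /\ LHS <= C2 * RHS.
Proof.
have [cI_gt0 cA_gt0] := hc eta heta.
have K_ge1 := rho_const_ge1 (cI eta) (cA eta).
exists (rho_const (cI eta) (cA eta) + 1)^-1, 1; split; first by rewrite invr_gt0; lra.
split=> // N n p t hn ht hp hm I LHS RHS.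
have n_gt0 : (0 < n)%N by apply: leq_trans hn.
have p_ge0 i : (1 <= i <= N)%N -> 0 <= p i by move=> /hp /andP[].
have rho1_up := rho1_le_sqrt_lnorm (cI eta) (cA eta) N p n_gt0 ht.
have rho_low := sqrt_lnorm_le_rho n_gt0 ht cI_gt0 cA_gt0 p_ge0 hm.
have rho1_nneg := rho1_ge0 (cI eta) (cA eta) t n N p.
have rho2_nneg := rho2_ge0 (cI eta) t n N p.
rewrite /LHS /RHS /I; split; last by rewrite mul1r; lra.
by rewrite mulrC ler_pdivrMr; lra.
Qed.
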